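(* Let $0<p<1$, $n\ge2$, and let $X_1,\dots,X_n$ be i.i.d. with density $f_p(x)=px^{p-1}$, $0<x\le1$. Let $Q=\sum_{i=1}^n(X_i-\overline X)^2$. Then as $x\to0^+$, $$P\{Q\le x\}=O\big(x^{\min(pn,\,n-1)/2}\big)\ \text{ if } np\ne n-1,\qquad P\{Q\le x\}=O\big(x^{(n-1)/2}\ln(1/x)\big)\ \text{ if } np=n-1.$$ *)

From Stdlib Require Import Reals.
Open Scope R_scope.

Fixpoint rsum (n : nat) (f : nat -> R) : R :=
  match n with O => 0 | S k => rsum k f + f k end.
Fixpoint rprod (n : nat) (f : nat -> R) : R :=
  match n with O => 1 | S k => rprod k f * f k end.

(* CDF of the law with density f_p(x) = p x^(p-1) on (0,1]:
   F_p(t) = int_0^t p s^(p-1) ds = t^p for 0 <= t <= 1. *)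
Definition Fp (p t : R) : R :=
  if Rle_dec t 0 then 0 else if Rle_dec t 1 then Rpower t p else 1.

(* points of R^n are represented by x : nat -> R, only x 0 .. x (n-1) matter *)
Definition in_box (n : nat) (a b x : nat -> R) : Prop :=
  forall i, (i < n)%nat -> a i < x i <= b i.

(* probability, under the law of (X_1,...,X_n) i.i.d. with CDF Fp p,
   of the box (a,b] = prod_i (F(b_i) - F(a_i)) *)
Definition box_prob (p : R) (n : nat) (a b : nat -> R) : R :=
  rprod n (fun i => Rmax 0 (Fp p (b i) - Fp p (a i))).

(* P(S) <= c, where P is the (outer) product probability measure obtained
   from box probabilities by countable covers (Caratheodory extension). *)
Definition prob_le (p : R) (n : nat) (S : (nat -> R) -> Prop) (c : R) : Prop :=
  forall eps, 0 < eps ->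
    exists a b : nat -> nat -> R,
      (forall x, S x -> exists k, in_box n (a k) (b k) x) /\
      (forall N, rsum N (fun k => box_prob p n (a k) (b k)) <= c + eps).

Definition mean (n : nat) (x : nat -> R) : R := rsum n x / INR n.

Definition Qstat (n : nat) (x : nat -> R) : R :=
  rsum n (fun i => (x i - mean n x) ^ 2).

From Stdlib Require Import Reals Lra Lia ZArith.
Open Scope R_scope.

(* Put [s = sqrt x] and [alpha = (1 - p) n].  If [Q <= x] then every
   coordinate lies within [2 s] of the first one, so the event is covered by
   the cubes [((m - 3) s, (m + 3) s]^n], [m : nat], together with countably
   many null boxes in the nonpositive region.  The [m]-th cube has
   probability at most [(7 s) ^ (p n)] for [m <= 4], and, by the density
   bound [F (u + h) - F u <= h u ^ (p - 1)], at most
   [6 ^ n s ^ (p n) (m - 3) ^ (- alpha)] otherwise; it is null once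
   [(m - 3) s > 1].  Comparing [sum_(2 <= j <= 1/s) j ^ (- alpha)] with an
   antiderivative [phi] of [t ^ (- alpha)] (mean value theorem) yields
     [P (Q <= x) <= x ^ (p n / 2) (5 * 7 ^ (p n) + 6 ^ n (phi (1/s) - phi 1))]
   (lemma [small_Q_prob_le]).  The three regimes of the theorem correspond
   to [phi t = t ^ a / a] with [a = 1 - alpha < 0] or [a > 0], and to
   [phi = ln] when [alpha = 1], i.e. [p n = n - 1]. *)

Lemma rsum_nonneg n f : (forall i, (i < n)%nat -> 0 <= f i) -> 0 <= rsum n f.
Proof.
  induction n as [|n IH]; simpl; intros Hf; [lra|].
  assert (0 <= rsum n f) by (apply IH; intros; apply Hf; lia).
  assert (0 <= f n) by (apply Hf; lia).
  lra.
Qed.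

Lemma rsum_term_le n f i :
  (forall j, (j < n)%nat -> 0 <= f j) -> (i < n)%nat -> f i <= rsum n f.
Proof.
  induction n as [|n IH]; simpl; intros Hf Hi; [lia|].
  assert (0 <= rsum n f) by (apply rsum_nonneg; intros; apply Hf; lia).
  assert (0 <= f n) by (apply Hf; lia).
  destruct (Nat.eq_dec i n) as [->|Hne]; [lra|].
  assert (f i <= rsum n f) by (apply IH; [intros; apply Hf|]; lia).
  lra.
Qed.

Lemma rsum_interleaved_telescope (f : nat -> R) (P : nat -> R) :
  (forall m, f (2 * m)%nat <= P (S m) - P m) ->
  (forall m, f (S (2 * m)) <= 0) ->
  forall N, rsum N f <= P (Nat.div2 (S N)) - P O.
Proof.
  intros Heven Hodd N. induction N as [|N IH]; simpl rsum; [simpl; lra|].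
  destruct (Nat.Even_or_Odd N) as [[m ->]|[m ->]].
  - specialize (Heven m).
    replace (Nat.div2 (S (2 * m))) with m in IH by (symmetry; apply Nat.div2_succ_double).
    change (Nat.div2 (S (S (2 * m)))) with (S (Nat.div2 (2 * m))).
    rewrite Nat.div2_double. lra.
  - replace (2 * m + 1)%nat with (S (2 * m)) in * by lia.
    specialize (Hodd m).
    change (Nat.div2 (S (S (2 * m)))) with (S (Nat.div2 (2 * m))) in IH.
    change (Nat.div2 (S (S (S (2 * m))))) with (S (Nat.div2 (S (2 * m)))).
    rewrite Nat.div2_double in IH. rewrite Nat.div2_succ_double. lra.
Qed.

Lemma rprod_const n c : rprod n (fun _ => c) = c ^ n.
Proof. induction n as [|n IH]; simpl; [ring|rewrite IH; ring]. Qed.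

Lemma rprod_first_zero n f : (0 < n)%nat -> f O = 0 -> rprod n f = 0.
Proof.
  induction n as [|n IH]; simpl; intros Hn H0; [lia|].
  destruct n as [|n]; [simpl; rewrite H0; ring|].
  rewrite IH by (auto; lia). ring.
Qed.

Lemma Rpower_pos a c : 0 < Rpower a c.
Proof. apply exp_pos. Qed.

Lemma Rpower_base_1 c : Rpower 1 c = 1.
Proof. unfold Rpower. rewrite ln_1, Rmult_0_r. apply exp_0. Qed.

Lemma exp_le_mono a b : a <= b -> exp a <= exp b.
Proof. intros [H|H]; [left; apply exp_increasing; exact H|rewrite H; lra]. Qed.

Lemma Rpower_nonpos_antimono a b c :
  c <= 0 -> 0 < a <= b -> Rpower b c <= Rpower a c.
Proof.
  intros Hc Hab. replace c with (- - c) by ring. rewrite (Rpower_Ropp b (- c)), (Rpower_Ropp a (- c)).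
  apply Rinv_le_contravar; [apply Rpower_pos|apply Rle_Rpower_l; lra].
Qed.

Lemma Rpower_small_base_antimono s e1 e2 :
  0 < s <= 1 -> e1 <= e2 -> Rpower s e2 <= Rpower s e1.
Proof.
  intros Hs He. apply exp_le_mono.
  assert (ln s <= 0).
  { rewrite <- ln_1. destruct (Req_dec s 1) as [->|]; [lra|].
    left; apply ln_increasing; lra. }
  nra.
Qed.

Lemma Rpower_pow_mult c q n : 0 < c -> Rpower c q ^ n = Rpower c (q * INR n).
Proof. intros Hc. rewrite <- Rpower_pow, Rpower_mult by apply Rpower_pos. reflexivity. Qed.

Lemma Rpower_sqrt_base x e : 0 < x -> Rpower (sqrt x) e = Rpower x (e / 2).
Proof. intros Hx. rewrite <- Rpower_sqrt, Rpower_mult by exact Hx. f_equal. field. Qed.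

Lemma Rpower_concave_increment u h p :
  0 < u -> 0 <= h -> p <= 1 ->
  Rpower (u + h) p - Rpower u p <= h * Rpower u (p - 1).
Proof.
  intros Hu Hh Hp.
  assert (Hsplit : forall t, 0 < t -> Rpower t p = t * Rpower t (p - 1)).
  { intros t Ht. rewrite <- (Rpower_1 t) at 2 by exact Ht.
    rewrite <- Rpower_plus. f_equal. ring. }
  rewrite (Hsplit (u + h)), (Hsplit u) by lra.
  assert (Rpower (u + h) (p - 1) <= Rpower u (p - 1))
    by (apply Rpower_nonpos_antimono; lra).
  pose proof (Rpower_pos (u + h) (p - 1)).
  nra.
Qed.

Section DistributionFunction.
Variable p : R.
Hypothesis hp : 0 < p < 1.

Lemma Fp_nonpos t : t <= 0 -> Fp p t = 0.
Proof. intros; unfold Fp; destruct (Rle_dec t 0); lra. Qed.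

Lemma Fp_gt1 t : 1 < t -> Fp p t = 1.
Proof. intros; unfold Fp; destruct (Rle_dec t 0), (Rle_dec t 1); lra. Qed.

Lemma Rpower_p_ge1 t : 1 <= t -> 1 <= Rpower t p.
Proof. intros. rewrite <- (Rpower_O t) by lra. apply Rle_Rpower; lra. Qed.

Lemma Rpower_p_le1 t : 0 < t <= 1 -> Rpower t p <= 1.
Proof. intros. rewrite <- (Rpower_O t) by lra. apply Rpower_small_base_antimono; lra. Qed.

Lemma Fp_nonneg t : 0 <= Fp p t.
Proof.
  unfold Fp; destruct (Rle_dec t 0), (Rle_dec t 1); try lra.
  left; apply Rpower_pos.
Qed.

Lemma Fp_le_Rpower t : 0 < t -> Fp p t <= Rpower t p.
Proof.
  intros; unfold Fp; destruct (Rle_dec t 0), (Rle_dec t 1); try lra.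
  apply Rpower_p_ge1; lra.
Qed.

Lemma Fp_mono a b : a <= b -> Fp p a <= Fp p b.
Proof.
  intros Hab; unfold Fp.
  destruct (Rle_dec a 0), (Rle_dec b 0), (Rle_dec a 1), (Rle_dec b 1); try lra.
  - left; apply Rpower_pos.
  - apply Rle_Rpower_l; lra.
  - apply Rpower_p_le1; lra.
Qed.

(* Increment bound coming from the density [p t ^ (p - 1) <= t ^ (p - 1)]. *)
Lemma Fp_increment u h :
  0 < u -> 0 <= h -> Fp p (u + h) - Fp p u <= h * Rpower u (p - 1).
Proof.
  intros Hu Hh. eapply Rle_trans; [|apply Rpower_concave_increment; lra].
  unfold Fp.
  destruct (Rle_dec u 0), (Rle_dec (u + h) 0), (Rle_dec u 1), (Rle_dec (u + h) 1);
    try lra.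
  - assert (1 <= Rpower (u + h) p) by (apply Rpower_p_ge1; lra). lra.
  - assert (Rpower u p <= Rpower (u + h) p) by (apply Rle_Rpower_l; lra). lra.
Qed.

End DistributionFunction.

Lemma prob_le_of_cover p n (S : (nat -> R) -> Prop) c (a b : nat -> nat -> R) :
  (forall y, S y -> exists k, in_box n (a k) (b k) y) ->
  (forall N, rsum N (fun k => box_prob p n (a k) (b k)) <= c) ->
  prob_le p n S c.
Proof.
  intros Hcov Hsum eps Heps. exists a, b. split; [exact Hcov|].
  intros N. specialize (Hsum N). lra.
Qed.

Lemma prob_le_weaken p n (S : (nat -> R) -> Prop) c c' :
  c <= c' -> prob_le p n S c -> prob_le p n S c'.
Proof.
  intros Hc HS eps Heps. destruct (HS eps Heps) as (a & b & Hcov & Hsum).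
  exists a, b. split; [exact Hcov|]. intros N. specialize (Hsum N). lra.
Qed.

Lemma Qstat_coord_dev n y x i :
  Qstat n y <= x -> (i < n)%nat -> Rabs (y i - mean n y) <= sqrt x.
Proof.
  intros HQ Hi. rewrite <- sqrt_Rsqr_abs. apply sqrt_le_1_alt.
  eapply Rle_trans; [|exact HQ]. unfold Rsqr, Qstat.
  replace ((y i - mean n y) * (y i - mean n y))
    with ((fun k => (y k - mean n y) ^ 2) i) by (simpl; ring).
  apply (rsum_term_le n (fun k => (y k - mean n y) ^ 2));
    [intros; apply pow2_ge_0|exact Hi].
Qed.

Lemma Qstat_spread n y x i :
  (0 < n)%nat -> Qstat n y <= x -> (i < n)%nat ->
  - (2 * sqrt x) <= y i - y O <= 2 * sqrt x.
Proof.
  intros Hn HQ Hi.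
  pose proof (Qstat_coord_dev n y x i HQ Hi) as Hyi.
  pose proof (Qstat_coord_dev n y x O HQ Hn) as Hy0.
  unfold Rabs in Hyi, Hy0.
  destruct (Rcase_abs (y i - mean n y)), (Rcase_abs (y O - mean n y)); lra.
Qed.

Lemma nat_floor r : 0 <= r -> exists m : nat, INR m <= r < INR m + 1.
Proof.
  intros Hr. destruct (archimed r) as [H1 H2].
  assert (Hup : (0 < up r)%Z) by (apply lt_0_IZR; lra).
  exists (Z.to_nat (up r - 1)).
  rewrite INR_IZR_INZ, Z2Nat.id, minus_IZR by lia. lra.
Qed.

(* Corners of the [k]-th covering box at scale [s], with [m = k / 2]:
   for even [k], the cube [((m - 3) s, (m + 3) s]^n]; for odd [k], a box
   whose first side [(-(m + 1), -m]] lies in the nonpositive half-line,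
   so that it carries no probability. *)
Definition cover_lo (s : R) (k : nat) : nat -> R := fun i =>
  let m := INR (Nat.div2 k) in
  if Nat.even k then (m - 3) * s
  else if Nat.eqb i 0 then - (m + 1) else - (m + 3).

Definition cover_hi (s : R) (k : nat) : nat -> R := fun i =>
  let m := INR (Nat.div2 k) in
  if Nat.even k then (m + 3) * s
  else if Nat.eqb i 0 then - m else 2 - m.

Lemma even_div2_double m : Nat.even (2 * m) = true /\ Nat.div2 (2 * m) = m.
Proof. split; [apply Nat.even_even|apply Nat.div2_double]. Qed.

Lemma odd_div2_double m : Nat.even (S (2 * m)) = false /\ Nat.div2 (S (2 * m)) = m.
Proof.
  split; [|apply Nat.div2_succ_double].
  replace (S (2 * m)) with (2 * m + 1)%nat by lia. apply Nat.even_odd.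
Qed.

Lemma cover_of_spread n s (y : nat -> R) :
  0 < s <= 1 ->
  (forall i, (i < n)%nat -> - (2 * s) <= y i - y O <= 2 * s) ->
  exists k, in_box n (cover_lo s k) (cover_hi s k) y.
Proof.
  intros Hs Hspread.
  destruct (Rle_dec (y O) 0) as [Hy|Hy].
  - destruct (nat_floor (- y O)) as [m Hm]; [lra|].
    exists (S (2 * m)). destruct (odd_div2_double m) as [Hev Hdiv].
    intros i Hi. specialize (Hspread i Hi).
    unfold cover_lo, cover_hi. rewrite Hev, Hdiv.
    destruct (Nat.eqb_spec i 0) as [->|]; lra.
  - assert (Hr : 0 <= y O / s) by (apply Rlt_le, Rdiv_lt_0_compat; lra).
    destruct (nat_floor _ Hr) as [m [Hm1 Hm2]].
    assert (INR m * s <= y O < (INR m + 1) * s).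
    { unfold Rdiv in Hm1, Hm2. split.
      - apply (Rmult_le_compat_r s) in Hm1; [|lra].
        rewrite Rmult_assoc, Rinv_l, Rmult_1_r in Hm1; lra.
      - apply (Rmult_lt_compat_r s) in Hm2; [|lra].
        rewrite Rmult_assoc, Rinv_l, Rmult_1_r in Hm2; lra. }
    exists (2 * m)%nat. destruct (even_div2_double m) as [Hev Hdiv].
    intros i Hi. specialize (Hspread i Hi).
    unfold cover_lo, cover_hi. rewrite Hev, Hdiv. nra.
Qed.

Definition cube_increment (p s : R) (m : nat) : R :=
  Rmax 0 (Fp p ((INR m + 3) * s) - Fp p ((INR m - 3) * s)).

Lemma box_prob_cube p n s m :
  box_prob p n (cover_lo s (2 * m)) (cover_hi s (2 * m)) = cube_increment p s m ^ n.
Proof.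
  destruct (even_div2_double m) as [Hev Hdiv].
  unfold box_prob, cover_lo, cover_hi. rewrite Hev, Hdiv. apply rprod_const.
Qed.

Lemma box_prob_null p n s m :
  (0 < n)%nat -> box_prob p n (cover_lo s (S (2 * m))) (cover_hi s (S (2 * m))) = 0.
Proof.
  intros Hn. destruct (odd_div2_double m) as [Hev Hdiv].
  pose proof (pos_INR m).
  apply rprod_first_zero; [exact Hn|].
  unfold cover_lo, cover_hi. rewrite Hev, Hdiv. simpl.
  rewrite !Fp_nonpos by lra. apply Rmax_left. lra.
Qed.

Section CubeIncrement.
Variables (p s : R).
Hypothesis hp : 0 < p < 1.
Hypothesis hs : 0 < s.

(* Cubes near the origin: the side lies in [(-oo, 7 s]]. *)
Lemma cube_increment_near m : (m <= 4)%nat -> cube_increment p s m <= Rpower (7 * s) p.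
Proof.
  intros Hm. assert (INR m <= 4) by (replace 4 with (INR 4) by (simpl; ring); apply le_INR; exact Hm).
  pose proof (pos_INR m).
  apply Rmax_lub; [left; apply Rpower_pos|].
  pose proof (Fp_nonneg p ((INR m - 3) * s)).
  assert (Fp p ((INR m + 3) * s) <= Fp p (7 * s)) by (apply Fp_mono; nra).
  pose proof (Fp_le_Rpower p hp (7 * s) ltac:(lra)).
  lra.
Qed.

(* Cubes away from the origin, [j = m - 3 > 0]: the density bound gives
   [F((j + 6) s) - F(j s) <= 6 s (j s) ^ (p - 1) = 6 s ^ p j ^ (p - 1)]. *)
Lemma cube_increment_far m :
  0 < INR m - 3 ->
  cube_increment p s m <= 6 * Rpower s p * Rpower (INR m - 3) (p - 1).
Proof.
  intros Hj. set (j := INR m - 3) in *.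
  assert (Hrhs : 0 <= 6 * Rpower s p * Rpower j (p - 1)).
  { pose proof (Rpower_pos s p). pose proof (Rpower_pos j (p - 1)). nra. }
  apply Rmax_lub; [exact Hrhs|].
  replace ((INR m + 3) * s) with (j * s + 6 * s) by (unfold j; ring).
  replace ((INR m - 3) * s) with (j * s) by (unfold j; ring).
  eapply Rle_trans; [apply Fp_increment; nra|].
  rewrite <- Rpower_mult_distr by lra.
  replace (Rpower s p) with (s * Rpower s (p - 1)).
  - lra.
  - rewrite <- (Rpower_1 s) at 1 by lra. rewrite <- Rpower_plus. f_equal. ring.
Qed.

Lemma cube_increment_beyond m : 1 < (INR m - 3) * s -> cube_increment p s m = 0.
Proof.
  intros Hm. unfold cube_increment.
  rewrite !Fp_gt1 by nra. apply Rmax_left. lra.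
Qed.

End CubeIncrement.

Section Antiderivative.
Variables (phi : R -> R) (alpha : R).
Hypothesis phi_deriv : forall c, 0 < c -> derivable_pt_lim phi c (Rpower c (- alpha)).

Lemma antiderivative_mono t t' : 0 < t -> t <= t' -> phi t <= phi t'.
Proof.
  intros Ht Htt'. destruct (Req_dec t t') as [<-|Hne]; [lra|].
  destruct (MVT_cor2 phi (fun c => Rpower c (- alpha)) t t') as [c [Hc _]];
    [lra|intros; apply phi_deriv; lra|].
  pose proof (Rpower_pos c (- alpha)). nra.
Qed.

(* [j ^ (- alpha) <= int_(j-1)^j t ^ (- alpha) dt] since the integrand is
   nonincreasing. *)
Lemma antiderivative_step j :
  0 <= alpha -> 1 < j -> Rpower j (- alpha) <= phi j - phi (j - 1).
Proof.
  intros Halpha Hj.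
  destruct (MVT_cor2 phi (fun c => Rpower c (- alpha)) (j - 1) j) as [c [Hc Hcj]];
    [lra|intros; apply phi_deriv; lra|].
  rewrite Hc. replace (j - (j - 1)) with 1 by ring. rewrite Rmult_1_r.
  apply Rpower_nonpos_antimono; lra.
Qed.

End Antiderivative.

Lemma Rpower_antiderivative a c :
  a <> 0 -> 0 < c ->
  derivable_pt_lim (fun t => / a * Rpower t a) c (Rpower c (- (1 - a))).
Proof.
  intros Ha Hc.
  replace (Rpower c (- (1 - a))) with (/ a * (a * Rpower c (a - 1)))
    by (replace (- (1 - a)) with (a - 1) by ring; field; exact Ha).
  apply (derivable_pt_lim_scal (fun t => Rpower t a)).
  apply derivable_pt_lim_power; exact Hc.
Qed.

Lemma ln_antiderivative alpha c :
  alpha = 1 -> 0 < c -> derivable_pt_lim ln c (Rpower c (- alpha)).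
Proof.
  intros -> Hc. rewrite Rpower_Ropp, Rpower_1 by exact Hc.
  apply derivable_pt_lim_ln; exact Hc.
Qed.

Section CoverSum.
Variables (p : R) (n : nat) (s : R) (phi : R -> R).
Hypothesis hp : 0 < p < 1.
Hypothesis hn : (0 < n)%nat.
Hypothesis hs : 0 < s <= 1.
Hypothesis phi_deriv :
  forall c, 0 < c -> derivable_pt_lim phi c (Rpower c (- ((1 - p) * INR n))).

(* A potential whose increments dominate the cube probabilities
   [cube_increment p s m ^ n]: the first part pays [(7 s) ^ (p n)] for each
   of the five cubes near the origin; the second compares the remaining ones,
   of probability at most [6 ^ n s ^ (p n) (m - 3) ^ (- alpha)], with the
   antiderivative [phi], truncated at [m - 3 = 1 / s] beyond which cubes are
   null. *)
Definition potential (m : nat) : R :=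
  Rpower (7 * s) (p * INR n) * Rmin (INR m) 5
  + 6 ^ n * Rpower s (p * INR n) * phi (Rmin (Rmax (INR m - 4) 1) (/ s)).

Lemma potential_step_near m :
  (m < 5)%nat -> cube_increment p s m ^ n <= potential (S m) - potential m.
Proof.
  intros Hm. unfold potential. rewrite S_INR.
  assert (INR m <= 4) by (replace 4 with (INR 4) by (simpl; ring); apply le_INR; lia).
  pose proof (pos_INR m).
  assert (1 <= / s) by (rewrite <- Rinv_1; apply Rinv_le_contravar; lra).
  rewrite (Rmin_left (INR m + 1)), (Rmin_left (INR m)),
    (Rmax_right (INR m + 1 - 4)), (Rmax_right (INR m - 4)) by lra.
  assert (Hg : cube_increment p s m <= Rpower (7 * s) p)
    by (apply cube_increment_near; [exact hp|lra|lia]).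
  assert (0 <= cube_increment p s m) by apply Rmax_l.
  assert (cube_increment p s m ^ n <= Rpower (7 * s) p ^ n) by (apply pow_incr; lra).
  rewrite Rpower_pow_mult in * by lra.
  lra.
Qed.

Lemma potential_step_far m :
  (5 <= m)%nat -> cube_increment p s m ^ n <= potential (S m) - potential m.
Proof.
  intros Hm. unfold potential. rewrite S_INR.
  assert (5 <= INR m) by (replace 5 with (INR 5) by (simpl; ring); apply le_INR; exact Hm).
  rewrite (Rmin_right (INR m + 1)), (Rmin_right (INR m)),
    (Rmax_left (INR m + 1 - 4)), (Rmax_left (INR m - 4)) by lra.
  set (j := INR m - 3).
  assert (Hj : 2 <= j) by (unfold j; lra).
  replace (INR m + 1 - 4) with j by (unfold j; ring).
  replace (INR m - 4) with (j - 1) by (unfold j; ring).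
  set (c2 := 6 ^ n * Rpower s (p * INR n)).
  assert (Hc2 : 0 < c2) by (apply Rmult_lt_0_compat; [apply pow_lt; lra|apply Rpower_pos]).
  destruct (Rle_dec (j * s) 1) as [Hjs|Hjs].
  - assert (j <= / s) by (apply (Rmult_le_reg_r s); [lra|rewrite Rinv_l; lra]).
    rewrite (Rmin_left j), (Rmin_left (j - 1)) by lra.
    assert (Hg : cube_increment p s m <= 6 * Rpower s p * Rpower j (p - 1))
      by (apply cube_increment_far; lra).
    assert (0 <= cube_increment p s m) by apply Rmax_l.
    assert (Hgn : cube_increment p s m ^ n
                  <= c2 * Rpower j (- ((1 - p) * INR n))).
    { eapply Rle_trans; [apply pow_incr; split; [assumption|exact Hg]|].
      unfold c2. rewrite !Rpow_mult_distr, !Rpower_pow_mult by lra.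
      replace ((p - 1) * INR n) with (- ((1 - p) * INR n)) by ring. lra. }
    assert (Rpower j (- ((1 - p) * INR n)) <= phi j - phi (j - 1)).
    { apply antiderivative_step; [exact phi_deriv| |lra].
      pose proof (pos_INR n). nra. }
    nra.
  - rewrite (cube_increment_beyond p s (proj1 hs)) by (unfold j in Hjs; lra).
    rewrite pow_i by exact hn.
    assert (phi (Rmin (j - 1) (/ s)) <= phi (Rmin j (/ s))).
    { apply (antiderivative_mono phi ((1 - p) * INR n) phi_deriv).
      - apply Rmin_glb_lt; [lra|apply Rinv_0_lt_compat; lra].
      - apply Rle_min_compat_r. lra. }
    nra.
Qed.

Lemma potential_bounds M :
  potential M - potential O
  <= 5 * Rpower (7 * s) (p * INR n) + 6 ^ n * Rpower s (p * INR n) * (phi (/ s) - phi 1).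
Proof.
  unfold potential. simpl INR.
  assert (1 <= / s) by (rewrite <- Rinv_1; apply Rinv_le_contravar; lra).
  rewrite (Rmin_left 0 5), (Rmax_right (0 - 4) 1), (Rmin_left 1 (/ s)) by lra.
  assert (Rmin (INR M) 5 <= 5) by apply Rmin_r.
  assert (phi (Rmin (Rmax (INR M - 4) 1) (/ s)) <= phi (/ s)).
  { apply (antiderivative_mono phi ((1 - p) * INR n) phi_deriv); [|apply Rmin_r].
    apply Rmin_glb_lt; [pose proof (Rmax_r (INR M - 4) 1)|]; lra. }
  assert (0 < Rpower (7 * s) (p * INR n)) by apply Rpower_pos.
  assert (0 < 6 ^ n * Rpower s (p * INR n))
    by (apply Rmult_lt_0_compat; [apply pow_lt; lra|apply Rpower_pos]).
  nra.
Qed.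

Lemma cover_sum_bound N :
  rsum N (fun k => box_prob p n (cover_lo s k) (cover_hi s k))
  <= 5 * Rpower (7 * s) (p * INR n) + 6 ^ n * Rpower s (p * INR n) * (phi (/ s) - phi 1).
Proof.
  eapply Rle_trans; [apply (rsum_interleaved_telescope _ potential)|apply potential_bounds].
  - intros m. rewrite box_prob_cube.
    destruct (Nat.lt_ge_cases m 5);
      [apply potential_step_near|apply potential_step_far]; assumption.
  - intros m. rewrite box_prob_null by exact hn. lra.
Qed.

End CoverSum.

Lemma small_Q_prob_le p n (phi : R -> R) x :
  0 < p < 1 -> (0 < n)%nat -> 0 < x <= 1 ->
  (forall c, 0 < c -> derivable_pt_lim phi c (Rpower c (- ((1 - p) * INR n)))) ->
  prob_le p n (fun y => Qstat n y <= x)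
    (Rpower x (p * INR n / 2)
     * (5 * Rpower 7 (p * INR n) + 6 ^ n * (phi (/ sqrt x) - phi 1))).
Proof.
  intros hp hn hx phi_deriv.
  assert (Hs : 0 < sqrt x <= 1)
    by (split; [apply sqrt_lt_R0|rewrite <- sqrt_1; apply sqrt_le_1_alt]; lra).
  apply (prob_le_of_cover p n _ _ (cover_lo (sqrt x)) (cover_hi (sqrt x))).
  - intros y HQ. apply cover_of_spread; [exact Hs|].
    intros i Hi. exact (Qstat_spread n y x i hn HQ Hi).
  - intros N. eapply Rle_trans; [exact (cover_sum_bound p n (sqrt x) phi hp hn Hs phi_deriv N)|].
    rewrite <- Rpower_mult_distr, Rpower_sqrt_base by lra.
    right. ring.
Qed.

(* The case [p n < n - 1]: the antiderivative [t ^ a / a], [a = 1 - alpha < 0],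
   is negative, so the sum over far cubes is bounded. *)
Lemma small_Q_rate_light_tail p n x :
  0 < p < 1 -> (0 < n)%nat -> p * INR n < INR n - 1 -> 0 < x <= 1 ->
  prob_le p n (fun y => Qstat n y <= x)
    ((5 * Rpower 7 (p * INR n) - 6 ^ n / (1 - (1 - p) * INR n))
     * Rpower x (p * INR n / 2)).
Proof.
  intros hp hn Hpn hx. set (a := 1 - (1 - p) * INR n).
  assert (Ha : a < 0) by (unfold a; lra).
  assert (Hainv : / a < 0) by (apply Rinv_lt_0_compat; exact Ha).
  eapply prob_le_weaken;
    [|apply (small_Q_prob_le p n (fun t => / a * Rpower t a)); [exact hp|exact hn|exact hx|]].
  - rewrite Rpower_base_1.
    assert (/ a * Rpower (/ sqrt x) a <= 0)
      by (pose proof (Rpower_pos (/ sqrt x) a); nra).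
    assert (0 < Rpower x (p * INR n / 2) * 6 ^ n)
      by (apply Rmult_lt_0_compat; [apply Rpower_pos|apply pow_lt; lra]).
    unfold Rdiv. nra.
  - intros c Hc. replace ((1 - p) * INR n) with (1 - a) by (unfold a; ring).
    apply Rpower_antiderivative; lra.
Qed.

(* The case [p n > n - 1]: the antiderivative [t ^ a / a], [a = 1 - alpha > 0],
   grows like [x ^ (- a / 2)] at [t = 1 / sqrt x], which lowers the exponent
   from [p n / 2] to [(n - 1) / 2]. *)
Lemma small_Q_rate_heavy_tail p n x :
  0 < p < 1 -> (0 < n)%nat -> INR n - 1 < p * INR n -> 0 < x <= 1 ->
  prob_le p n (fun y => Qstat n y <= x)
    ((5 * Rpower 7 (p * INR n) + 6 ^ n / (1 - (1 - p) * INR n))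
     * Rpower x ((INR n - 1) / 2)).
Proof.
  intros hp hn Hpn hx. set (a := 1 - (1 - p) * INR n).
  assert (Ha : 0 < a) by (unfold a; lra).
  assert (Hainv : 0 < / a) by (apply Rinv_0_lt_compat; exact Ha).
  eapply prob_le_weaken;
    [|apply (small_Q_prob_le p n (fun t => / a * Rpower t a)); [exact hp|exact hn|exact hx|]].
  - rewrite Rpower_base_1.
    assert (Hphi : Rpower (/ sqrt x) a = Rpower x (- a / 2)).
    { rewrite <- Rpower_sqrt, <- Rpower_Ropp, Rpower_mult by lra.
      f_equal. field. }
    assert (Hexp : Rpower x (p * INR n / 2) * Rpower x (- a / 2)
                   = Rpower x ((INR n - 1) / 2)).
    { rewrite <- Rpower_plus. f_equal. unfold a. field. }
    assert (Hmono : Rpower x (p * INR n / 2) <= Rpower x ((INR n - 1) / 2))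
      by (apply Rpower_small_base_antimono; lra).
    rewrite Hphi.
    assert (0 < Rpower x (p * INR n / 2) * 6 ^ n)
      by (apply Rmult_lt_0_compat; [apply Rpower_pos|apply pow_lt; lra]).
    assert (0 < Rpower 7 (p * INR n)) by apply Rpower_pos.
    assert (0 < 6 ^ n) by (apply pow_lt; lra).
    unfold Rdiv. nra.
  - intros c Hc. replace ((1 - p) * INR n) with (1 - a) by (unfold a; ring).
    apply Rpower_antiderivative; lra.
Qed.

(* The critical case [p n = n - 1]: the antiderivative is [ln], which
   contributes the factor [ln (1 / sqrt x) = ln (1 / x) / 2]. *)
Lemma small_Q_rate_critical p n x :
  0 < p < 1 -> (0 < n)%nat -> p * INR n = INR n - 1 -> 0 < x < / 4 ->
  prob_le p n (fun y => Qstat n y <= x)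
    ((5 * Rpower 7 (p * INR n) / ln 4 + 6 ^ n / 2)
     * (Rpower x ((INR n - 1) / 2) * ln (1 / x))).
Proof.
  intros hp hn Hpn hx.
  eapply prob_le_weaken; [|apply (small_Q_prob_le p n ln); [exact hp|exact hn|lra|]].
  - assert (Hln : ln (/ sqrt x) = / 2 * ln (1 / x)).
    { rewrite <- Rpower_sqrt, <- Rpower_Ropp, ln_Rpower by lra.
      unfold Rdiv. rewrite Rmult_1_l, ln_Rinv by lra. ring. }
    assert (Hl4 : 0 < ln 4) by (rewrite <- ln_1; apply ln_increasing; lra).
    assert (H4 : ln 4 <= ln (1 / x)).
    { left. apply ln_increasing; [lra|].
      apply (Rmult_lt_reg_r x); [lra|]. unfold Rdiv. rewrite Rmult_1_l, Rinv_l; lra. }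
    assert (Hratio : 1 <= ln (1 / x) / ln 4)
      by (apply (Rmult_le_reg_r (ln 4)); [exact Hl4|]; unfold Rdiv;
          rewrite Rmult_assoc, Rinv_l; lra).
    rewrite Hln, ln_1, Hpn.
    set (X := Rpower x ((INR n - 1) / 2)).
    assert (0 < X) by apply Rpower_pos.
    assert (0 < 5 * Rpower 7 (INR n - 1) * X)
      by (pose proof (Rpower_pos 7 (INR n - 1)); nra).
    assert (0 < 6 ^ n) by (apply pow_lt; lra).
    assert (5 * Rpower 7 (INR n - 1) * X
            <= 5 * Rpower 7 (INR n - 1) * X * (ln (1 / x) / ln 4)).
    { rewrite <- (Rmult_1_r (5 * Rpower 7 (INR n - 1) * X)) at 1.
      apply Rmult_le_compat_l; lra. }
    unfold Rdiv in *. nra.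
  - intros c Hc. apply ln_antiderivative; [lra|exact Hc].
Qed.

Theorem lemma2 (p : R) (n : nat) (hp : 0 < p < 1) (hn : (2 <= n)%nat) :
  (p * INR n <> INR n - 1 ->
    exists C delta, 0 < delta /\
      forall x, 0 < x < delta ->
        prob_le p n (fun y => Qstat n y <= x)
          (C * Rpower x (Rmin (p * INR n) (INR n - 1) / 2))) /\
  (p * INR n = INR n - 1 ->
    exists C delta, 0 < delta /\
      forall x, 0 < x < delta ->
        prob_le p n (fun y => Qstat n y <= x)
          (C * (Rpower x ((INR n - 1) / 2) * ln (1 / x)))).
Proof.
  assert (hn0 : (0 < n)%nat) by lia.
  split.
  - intros Hne. destruct (Rlt_or_le (p * INR n) (INR n - 1)) as [Hlt|Hge].
    + exists (5 * Rpower 7 (p * INR n) - 6 ^ n / (1 - (1 - p) * INR n)), 1.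
      split; [lra|]. intros x Hx. rewrite Rmin_left by lra.
      apply small_Q_rate_light_tail; auto; lra.
    + exists (5 * Rpower 7 (p * INR n) + 6 ^ n / (1 - (1 - p) * INR n)), 1.
      split; [lra|]. intros x Hx. rewrite Rmin_right by lra.
      apply small_Q_rate_heavy_tail; auto; lra.
  - intros Heq. exists (5 * Rpower 7 (p * INR n) / ln 4 + 6 ^ n / 2), (/ 4).
    split; [lra|]. intros x Hx. apply small_Q_rate_critical; auto.
Qed.
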